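(* Let $X,Y$ be standard coarse spaces and $f\colon X\to Y$ a standard map that is proper and bornological with respect to the induced prebornologies. Then ${}^*f$ maps $\mathrm{INF}(X)$ into $\mathrm{INF}(Y)$, and: $f$ is bornologous if and only if ${}^*f\colon\partial_SX\to\partial_SY$ is bornologous; and $f$ is effectively proper if and only if ${}^*f\colon\partial_SX\to\partial_SY$ is effectively proper.
   Context: Nonstandard framework with transfer and sufficient saturation. Coarse structure $\mathcal{C}_X$: family of subsets of $X\times X$ containing the diagonal, closed under subsets, finite unions, inverses, compositions. Induced prebornology $\mathcal{B}_X=\{B: B\times B\in\mathcal{C}_X\}$; $\mathrm{FIN}(X)=\bigcup_{B\in\mathcal{B}_X}{}^*B$, $\mathrm{INF}(X)={}^*X\setminus\mathrm{FIN}(X)$. $S^cX$ is ${}^*X$ with coarse structure $\{E\subseteq{}^*X\times{}^*X: E\subseteq{}^*F\text{ for some }F\in\mathcal{C}_X\}$; the S-corona $\partial_SX$ is $\mathrm{INF}(X)$ with the restricted coarse structure $\{E\cap(\mathrm{INF}(X)\times\mathrm{INF}(X))\}$. A map $g$ between coarse spaces is bornologous if $(g\times g)(E)$ is controlled for all controlled $E$, effectively proper if $(g^{-1}\times g^{-1})(E)$ is controlled for all controlled $E$. Proper/bornological: preimages/images of bounded sets are bounded. *)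

(* Nonstandard framework modelled as an ultrapower X^I / U. *)
From Stdlib Require Import List.
Set Implicit Arguments.

Definition subset {T : Type} (A B : T -> Prop) : Prop := forall x, A x -> B x.

Definition diag (X : Type) : X * X -> Prop := fun p => fst p = snd p.
Definition inv_rel {X : Type} (E : X * X -> Prop) : X * X -> Prop :=
  fun p => E (snd p, fst p).
Definition comp_rel {X : Type} (E F : X * X -> Prop) : X * X -> Prop :=
  fun p => exists z, E (fst p, z) /\ F (z, snd p).

Record coarse_structure (X : Type) (C : (X * X -> Prop) -> Prop) : Prop := {
  cs_diag  : C (@diag X);
  cs_sub   : forall E F, C E -> subset F E -> C F;
  cs_union : forall E F, C E -> C F -> C (fun p => E p \/ F p);
  cs_inv   : forall E, C E -> C (inv_rel E);
  cs_comp  : forall E F, C E -> C F -> C (comp_rel E F) }.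

Definition bounded {X : Type} (C : (X * X -> Prop) -> Prop) (B : X -> Prop) : Prop :=
  C (fun p => B (fst p) /\ B (snd p)).

Definition image2 {X Y : Type} (f : X -> Y) (E : X * X -> Prop) : Y * Y -> Prop :=
  fun q => exists p, E p /\ q = (f (fst p), f (snd p)).

Definition bornologous {X Y : Type} (CX : (X * X -> Prop) -> Prop)
  (CY : (Y * Y -> Prop) -> Prop) (f : X -> Y) : Prop :=
  forall E, CX E -> CY (image2 f E).

Definition eff_proper {X Y : Type} (CX : (X * X -> Prop) -> Prop)
  (CY : (Y * Y -> Prop) -> Prop) (f : X -> Y) : Prop :=
  forall E, CY E -> CX (fun p => E (f (fst p), f (snd p))).

Definition proper_map {X Y : Type} (CX : (X * X -> Prop) -> Prop)
  (CY : (Y * Y -> Prop) -> Prop) (f : X -> Y) : Prop :=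
  forall B, bounded CY B -> bounded CX (fun x => B (f x)).

Definition bornological {X Y : Type} (CX : (X * X -> Prop) -> Prop)
  (CY : (Y * Y -> Prop) -> Prop) (f : X -> Y) : Prop :=
  forall B, bounded CX B -> bounded CY (fun y => exists x, B x /\ y = f x).

Record ultrafilter (I : Type) (U : (I -> Prop) -> Prop) : Prop := {
  uf_full   : U (fun _ => True);
  uf_proper : ~ U (fun _ => False);
  uf_up     : forall A B, U A -> subset A B -> U B;
  uf_inter  : forall A B, U A -> U B -> U (fun i => A i /\ B i);
  uf_ultra  : forall A, U A \/ U (fun i => ~ A i) }.

(* Saturation for families of internal sets indexed by sets of cardinality
   at most |K|: an internal subset of *T is given by a sequence
   (A i)_{i in I} of subsets of T; x in [A] iff {i | A i (x i)} in U. *)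
Definition saturated_for (I : Type) (U : (I -> Prop) -> Prop) (K : Type) : Prop :=
  forall (T J : Type) (g : J -> K), (forall a b, g a = g b -> a = b) ->
  forall A : J -> I -> T -> Prop,
    (forall l : list J, exists x : I -> T,
        forall j, In j l -> U (fun i => A j i (x i))) ->
    exists x : I -> T, forall j, U (fun i => A j i (x i)).

(* nonstandard extensions (points of *X are represented by sequences I -> X) *)
Definition star {I X : Type} (U : (I -> Prop) -> Prop) (A : X -> Prop) :
  (I -> X) -> Prop := fun x => U (fun i => A (x i)).

Definition starR {I X : Type} (U : (I -> Prop) -> Prop) (F : X * X -> Prop) :
  (I -> X) * (I -> X) -> Prop :=
  fun p => U (fun i => F (fst p i, snd p i)).

Definition starf {I X Y : Type} (f : X -> Y) (x : I -> X) : I -> Y :=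
  fun i => f (x i).

Definition FIN {I X : Type} (U : (I -> Prop) -> Prop) (CX : (X * X -> Prop) -> Prop)
  (x : I -> X) : Prop :=
  exists B, bounded CX B /\ star U B x.

Definition INF {I X : Type} (U : (I -> Prop) -> Prop) (CX : (X * X -> Prop) -> Prop)
  (x : I -> X) : Prop := ~ FIN U CX x.

Definition ScX_controlled {I X : Type} (U : (I -> Prop) -> Prop)
  (CX : (X * X -> Prop) -> Prop) (E : (I -> X) * (I -> X) -> Prop) : Prop :=
  exists F, CX F /\ subset E (starR U F).

Definition corona_controlled {I X : Type} (U : (I -> Prop) -> Prop)
  (CX : (X * X -> Prop) -> Prop) (G : (I -> X) * (I -> X) -> Prop) : Prop :=
  exists E, ScX_controlled U CX E /\
    forall p, G p <-> (E p /\ INF U CX (fst p) /\ INF U CX (snd p)).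

Definition corona_bornologous {I X Y : Type} (U : (I -> Prop) -> Prop)
  (CX : (X * X -> Prop) -> Prop) (CY : (Y * Y -> Prop) -> Prop) (f : X -> Y) : Prop :=
  forall E, corona_controlled U CX E ->
    corona_controlled U CY (image2 (starf f) E).

Definition corona_eff_proper {I X Y : Type} (U : (I -> Prop) -> Prop)
  (CX : (X * X -> Prop) -> Prop) (CY : (Y * Y -> Prop) -> Prop) (f : X -> Y) : Prop :=
  forall E, corona_controlled U CY E ->
    corona_controlled U CX
      (fun p => INF U CX (fst p) /\ INF U CX (snd p) /\
                E (starf f (fst p), starf f (snd p))).

(* If *f : d_S X -> d_S Y is bornologous but f is not, some controlled F has a
   non-controlled image; by saturation there is then a pair (a, b) in *F whose
   image lies in no *G with G controlled.  Such a pair lies at infinity: were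
   a in *B with B bounded, both a and b would lie in *N for the bounded
   F-neighbourhood N of B, and (f a, f b) in the controlled set *(f N x f N).
   The singleton {(a, b)} is then controlled in d_S X while its image is not.
   The effectively proper case is the same argument with the roles of X and Y
   exchanged, neighbourhoods being pulled back along the proper map f. *)
From Stdlib Require Import List Classical.

Definition sq {X : Type} (B : X -> Prop) : X * X -> Prop :=
  fun p => B (fst p) /\ B (snd p).

Definition image1 {X Y : Type} (f : X -> Y) (B : X -> Prop) : Y -> Prop :=
  fun y => exists x, B x /\ y = f x.

Definition preimage2 {X Y : Type} (f : X -> Y) (E : Y * Y -> Prop) : X * X -> Prop :=
  fun p => E (f (fst p), f (snd p)).

Definition nbhd {X : Type} (B : X -> Prop) (R : X * X -> Prop) : X -> Prop :=
  fun y => B y \/ exists x, B x /\ R (x, y).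

Definition bounded_nbhds {X : Type} (C : (X * X -> Prop) -> Prop)
  (R : X * X -> Prop) : Prop :=
  forall B, bounded C B -> bounded C (nbhd B R).

Lemma uf_inter_ex {I : Type} (U : (I -> Prop) -> Prop) (A B : I -> Prop) :
  ultrafilter U -> U A -> U B -> exists i, A i /\ B i.
Proof.
  intros uf HA HB. apply NNPP. intro Hno. apply (uf_proper uf).
  apply (uf_up uf) with (A := fun i => A i /\ B i); [apply (uf_inter uf); assumption|].
  intros i Hi. apply Hno. exists i. exact Hi.
Qed.

Lemma saturated_for_inj {I K K' : Type} (U : (I -> Prop) -> Prop) (e : K' -> K) :
  (forall k k', e k = e k' -> k = k') -> saturated_for U K -> saturated_for U K'.
Proof.
  intros e_inj sat T J g g_inj. apply (sat T J (fun j => e (g j))).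
  intros a b Hab. apply g_inj, e_inj, Hab.
Qed.

Section CoarseFacts.
Variables (X : Type) (C : (X * X -> Prop) -> Prop).
Hypothesis cs : coarse_structure C.

Lemma bounded_sub (A B : X -> Prop) : bounded C B -> subset A B -> bounded C A.
Proof.
  intros HB HAB. apply (cs_sub cs) with (E := sq B); [exact HB|].
  intros p [H1 H2]. split; apply HAB; assumption.
Qed.

Lemma controlled_restrict (G : X * X -> Prop) : C (fun q => C G /\ G q).
Proof.
  destruct (classic (C G)) as [HG | HG].
  - apply (cs_sub cs) with (E := G); [exact HG | intros q [_ Hq]; exact Hq].
  - apply (cs_sub cs) with (E := @diag X); [apply (cs_diag cs) | intros q [HG' _]; contradiction].
Qed.

Lemma controlled_list_union (l : list (X * X -> Prop)) :
  C (fun q => exists G, In G l /\ C G /\ G q).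
Proof.
  induction l as [| G l IH].
  - apply (cs_sub cs) with (E := @diag X); [apply (cs_diag cs) | intros q [G [[] _]]].
  - apply (cs_sub cs) with
      (E := fun q => (C G /\ G q) \/ exists G', In G' l /\ C G' /\ G' q).
    + apply (cs_union cs); [apply controlled_restrict | exact IH].
    + intros q [G' [[<- | Hin] HG']]; [left; exact HG' | right; exists G'; auto].
Qed.

(* [nbhd B R] is contained in the composite R'^-1 o (B x B) o R' with R' = diag u R. *)
Lemma controlled_bounded_nbhds (R : X * X -> Prop) : C R -> bounded_nbhds C R.
Proof.
  intros HR B HB.
  set (R' := fun p : X * X => diag p \/ R p).
  assert (HR' : C R') by (apply (cs_union cs); [apply (cs_diag cs) | exact HR]).
  apply (cs_sub cs) with (E := comp_rel (comp_rel (inv_rel R') (sq B)) R').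
  - apply (cs_comp cs); [apply (cs_comp cs); [apply (cs_inv cs) |] |]; assumption.
  - assert (Hnbhd : forall z, nbhd B R z -> exists b, B b /\ R' (b, z)).
    { intros z [Hz | [b Hb]]; [exists z; split; [exact Hz | left; reflexivity] |
                                exists b; split; [| right]; apply Hb]. }
    intros [x y] [Hx Hy].
    destruct (Hnbhd x Hx) as [b1 [Hb1 H1]], (Hnbhd y Hy) as [b2 [Hb2 H2]].
    exists b2. split; [exists b1; split; [exact H1 | split; assumption] | exact H2].
Qed.

End CoarseFacts.

Lemma preimage_bounded_nbhds {X Y : Type} (CX : (X * X -> Prop) -> Prop)
  (CY : (Y * Y -> Prop) -> Prop) (f : X -> Y) (G : Y * Y -> Prop) :
  coarse_structure CX -> coarse_structure CY ->
  proper_map CX CY f -> bornological CX CY f -> CY G ->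
  bounded_nbhds CX (preimage2 f G).
Proof.
  intros csX csY f_proper f_born HG B HB.
  apply bounded_sub with (B := fun x => nbhd (image1 f B) G (f x)); [exact csX | |].
  - apply f_proper, controlled_bounded_nbhds; [exact csY | exact HG | apply f_born, HB].
  - intros y [Hy | [x [Hx Hxy]]].
    + left. exists y. auto.
    + right. exists (f x). split; [exists x; auto | exact Hxy].
Qed.

Section Ultrapower.
Variables (I : Type) (U : (I -> Prop) -> Prop).
Hypothesis uf : ultrafilter U.

Lemma INF_pair_of_escape {X : Type} (C : (X * X -> Prop) -> Prop)
  (R : X * X -> Prop) (a b : I -> X) :
  bounded_nbhds C R -> bounded_nbhds C (inv_rel R) -> starR U R (a, b) ->
  (forall N, bounded C N -> ~ starR U (sq N) (a, b)) ->
  INF U C a /\ INF U C b.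
Proof.
  intros HR HRinv Hab Hescape. split.
  - intros [B [HB Ha]]. apply (Hescape (nbhd B R) (HR B HB)).
    apply (uf_up uf) with (A := fun i => B (a i) /\ R (a i, b i));
      [apply (uf_inter uf); assumption |].
    intros i [HBa HRab]. split; [left; exact HBa | right; exists (a i); auto].
  - intros [B [HB Hb]]. apply (Hescape (nbhd B (inv_rel R)) (HRinv B HB)).
    apply (uf_up uf) with (A := fun i => B (b i) /\ R (a i, b i));
      [apply (uf_inter uf); assumption |].
    intros i [HBb HRab]. split; [right; exists (b i); auto | left; exact HBb].
Qed.

Lemma saturated_escape {W Z : Type} (C : (Z * Z -> Prop) -> Prop) (g : W -> Z)
  (F : W * W -> Prop) :
  saturated_for U (Z * Z -> Prop) -> coarse_structure C -> ~ C (image2 g F) ->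
  exists a b : I -> W,
    starR U F (a, b) /\ forall G, C G -> ~ starR U G (starf g a, starf g b).
Proof.
  intros sat cs HF.
  destruct (sat (W * W)%type (Z * Z -> Prop) (fun G => G) (fun _ _ e => e)
              (fun G i w => F w /\ ~ (C G /\ G (g (fst w), g (snd w)))))
    as [x Hx].
  - intro l.
    destruct (classic (exists w, F w /\
                forall G, In G l -> ~ (C G /\ G (g (fst w), g (snd w)))))
      as [[w [Fw Hw]] | Hno].
    + exists (fun _ => w). intros G HG.
      apply (uf_up uf) with (A := fun _ => True); [apply (uf_full uf) |].
      intros i _. split; [exact Fw | apply Hw, HG].
    + exfalso. apply HF.
      apply (cs_sub cs) with (E := fun q => exists G, In G l /\ C G /\ G q);
        [apply controlled_list_union, cs |].
      intros q [w [Fw ->]]. apply NNPP. intro Hq. apply Hno.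
      exists w. split; [exact Fw |]. intros G HG HGw. apply Hq. exists G. auto.
  - exists (fun i => fst (x i)), (fun i => snd (x i)). split.
    + apply (uf_up uf) with (A := fun i => F (x i) /\ ~ (C (fun _ => False) /\ False));
        [apply (Hx (fun _ => False)) |].
      intros i [Fi _]. simpl. destruct (x i). exact Fi.
    + intros G HG HGs.
      destruct (uf_inter_ex U _ _ uf (Hx G) HGs) as [i [[_ Hn] HGi]].
      apply Hn. split; [exact HG | exact HGi].
Qed.

Lemma INF_starf {X Y : Type} (CX : (X * X -> Prop) -> Prop)
  (CY : (Y * Y -> Prop) -> Prop) (f : X -> Y) (x : I -> X) :
  proper_map CX CY f -> INF U CX x -> INF U CY (starf f x).
Proof.
  intros f_proper Hx [B [HB HBx]]. apply Hx.
  exists (fun x => B (f x)). split; [apply f_proper, HB | exact HBx].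
Qed.

Section Controlled.
Variables (X : Type) (C : (X * X -> Prop) -> Prop).

Lemma ScX_controlled_sub (E E' : (I -> X) * (I -> X) -> Prop) :
  ScX_controlled U C E -> subset E' E -> ScX_controlled U C E'.
Proof.
  intros [F [HF HEF]] HE'. exists F. split; [exact HF |].
  intros p Hp. apply HEF, HE', Hp.
Qed.

Lemma ScX_controlled_singleton (F : X * X -> Prop) (p : (I -> X) * (I -> X)) :
  C F -> starR U F p -> ScX_controlled U C (fun q => q = p).
Proof. intros HF Hp. exists F. split; [exact HF | intros q ->; exact Hp]. Qed.

Lemma corona_controlled_ScX (E : (I -> X) * (I -> X) -> Prop) :
  corona_controlled U C E -> ScX_controlled U C E.
Proof.
  intros [E0 [HE0 HE]]. apply ScX_controlled_sub with (E := E0); [exact HE0 |].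
  intros p Hp. apply HE, Hp.
Qed.

Lemma corona_controlled_of_ScX (E : (I -> X) * (I -> X) -> Prop) :
  ScX_controlled U C E -> (forall p, E p -> INF U C (fst p) /\ INF U C (snd p)) ->
  corona_controlled U C E.
Proof.
  intros HE HINF. exists E. split; [exact HE |].
  intro p. split; [intro Hp; split; [exact Hp | apply HINF, Hp] | tauto].
Qed.

End Controlled.

Section Maps.
Variables (X Y : Type) (CX : (X * X -> Prop) -> Prop) (CY : (Y * Y -> Prop) -> Prop)
  (f : X -> Y).
Hypotheses (csX : coarse_structure CX) (csY : coarse_structure CY)
  (f_proper : proper_map CX CY f) (f_born : bornological CX CY f).

Lemma ScX_controlled_image (E : (I -> X) * (I -> X) -> Prop) :
  bornologous CX CY f -> ScX_controlled U CX E ->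
  ScX_controlled U CY (image2 (starf f) E).
Proof.
  intros Hb [F [HF HEF]]. exists (image2 f F). split; [apply Hb, HF |].
  intros q [p [Ep ->]].
  apply (uf_up uf) with (A := fun i => F (fst p i, snd p i)); [apply HEF, Ep |].
  intros i Hi. exists (fst p i, snd p i). auto.
Qed.

Lemma ScX_controlled_preimage (E : (I -> Y) * (I -> Y) -> Prop) :
  eff_proper CX CY f -> ScX_controlled U CY E ->
  ScX_controlled U CX (fun p => E (starf f (fst p), starf f (snd p))).
Proof.
  intros He [G [HG HEG]]. exists (preimage2 f G). split; [apply He, HG |].
  intros p Hp. exact (HEG _ Hp).
Qed.

Lemma corona_bornologous_of_bornologous :
  bornologous CX CY f -> corona_bornologous U CX CY f.
Proof.
  intros Hb E HE. apply corona_controlled_of_ScX.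
  - apply ScX_controlled_image; [exact Hb | apply corona_controlled_ScX, HE].
  - intros q [p [Ep ->]]. destruct HE as [E0 [_ HE]]. apply HE in Ep.
    split; apply (INF_starf CX CY f); tauto.
Qed.

Lemma corona_eff_proper_of_eff_proper :
  eff_proper CX CY f -> corona_eff_proper U CX CY f.
Proof.
  intros He E HE. apply corona_controlled_of_ScX; [| tauto].
  apply ScX_controlled_sub with
    (E := fun p => E (starf f (fst p), starf f (snd p))).
  - apply ScX_controlled_preimage; [exact He | apply corona_controlled_ScX, HE].
  - intros p Hp. apply Hp.
Qed.

Lemma bornologous_of_corona_bornologous :
  saturated_for U (Y * Y -> Prop) ->
  corona_bornologous U CX CY f -> bornologous CX CY f.
Proof.
  intros sat Hcb F HF. apply NNPP. intro Hnot.
  destruct (saturated_escape CY f F sat csY Hnot) as [a [b [Hab Hescape]]].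
  assert (HINF : INF U CX a /\ INF U CX b).
  { apply (INF_pair_of_escape CX F).
    - apply controlled_bounded_nbhds; assumption.
    - apply controlled_bounded_nbhds; [exact csX | apply (cs_inv csX), HF].
    - exact Hab.
    - intros N HN HNab. apply (Hescape (sq (image1 f N)) (f_born N HN)).
      apply (uf_up uf) with (A := fun i => sq N (a i, b i)); [exact HNab |].
      intros i [Ha Hb]. split; [exists (a i) | exists (b i)]; auto. }
  assert (Hsingle : corona_controlled U CX (fun p => p = (a, b))).
  { apply corona_controlled_of_ScX;
      [apply ScX_controlled_singleton with (F := F); assumption | intros p ->; exact HINF]. }
  destruct (corona_controlled_ScX _ _ _ (Hcb _ Hsingle)) as [G [HG HimG]].
  apply (Hescape G HG), HimG. exists (a, b). auto.
Qed.

Lemma eff_proper_of_corona_eff_proper :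
  saturated_for U (X * X -> Prop) ->
  corona_eff_proper U CX CY f -> eff_proper CX CY f.
Proof.
  intros sat Hce G HG. apply NNPP. intro Hnot.
  assert (Hnot' : ~ CX (image2 (fun x => x) (preimage2 f G))).
  { intro Himg. apply Hnot, (cs_sub csX) with (E := image2 (fun x => x) (preimage2 f G));
      [exact Himg | intros [x y] Hp; exists (x, y); auto]. }
  destruct (saturated_escape CX (fun x => x) _ sat csX Hnot') as [a [b [Hab Hescape]]].
  assert (HINF : INF U CX a /\ INF U CX b).
  { apply (INF_pair_of_escape CX (preimage2 f G)); try assumption.
    - apply preimage_bounded_nbhds with (CY := CY); assumption.
    - apply preimage_bounded_nbhds with (CY := CY) (G := inv_rel G);
        [assumption.. | apply (cs_inv csY), HG].
    - intros N HN. apply Hescape, HN. }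
  assert (Hsingle : corona_controlled U CY (fun q => q = (starf f a, starf f b))).
  { apply corona_controlled_of_ScX.
    - apply ScX_controlled_singleton with (F := G); assumption.
    - intros q ->. split; apply (INF_starf CX CY f); tauto. }
  destruct (corona_controlled_ScX _ _ _ (Hce _ Hsingle)) as [H [HH HpreH]].
  apply (Hescape H HH), HpreH. simpl. tauto.
Qed.

End Maps.
End Ultrapower.

Theorem mainTheorem12 (I : Type) (U : (I -> Prop) -> Prop)
  (X Y : Type) (CX : (X * X -> Prop) -> Prop) (CY : (Y * Y -> Prop) -> Prop)
  (f : X -> Y) :
  ultrafilter U ->
  saturated_for U ((X * X -> Prop) + (Y * Y -> Prop)) ->
  coarse_structure CX -> coarse_structure CY ->
  proper_map CX CY f -> bornological CX CY f ->
  (forall x : I -> X, INF U CX x -> INF U CY (starf f x)) /\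
  (bornologous CX CY f <-> corona_bornologous U CX CY f) /\
  (eff_proper CX CY f <-> corona_eff_proper U CX CY f).
Proof.
  intros uf sat csX csY f_proper f_born.
  assert (satX : saturated_for U (X * X -> Prop))
    by (apply (saturated_for_inj U (@inl _ (Y * Y -> Prop))); [congruence | exact sat]).
  assert (satY : saturated_for U (Y * Y -> Prop))
    by (apply (saturated_for_inj U (@inr (X * X -> Prop) _)); [congruence | exact sat]).
  split; [intros x; apply INF_starf, f_proper |].
  split; split.
  - apply corona_bornologous_of_bornologous; assumption.
  - apply bornologous_of_corona_bornologous; assumption.
  - apply corona_eff_proper_of_eff_proper; assumption.
  - apply eff_proper_of_corona_eff_proper; assumption.
Qed.
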